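(* Let $(X,\mathcal{M})$ be a measurable space, $\Sigma$ a compact Hausdorff group with Haar probability measure $\mu_\Sigma$ acting measurably on $X$ via $T_\sigma$, and let $P,Q\in\mathcal{P}(X)$ be $\Sigma$-invariant (i.e. $P\circ T_\sigma^{-1}=P$, $Q\circ T_\sigma^{-1}=Q$ for all $\sigma\in\Sigma$). (i) If $\Gamma\subset\mathcal{M}_b(X)$ satisfies $S_\Sigma[\Gamma]\subset\Gamma$, then $D_f^\Gamma(Q\|P)=D_f^{\Gamma^{\mathrm{inv}}_\Sigma}(Q\|P)$ and $W^\Gamma(Q,P)=W^{\Gamma^{\mathrm{inv}}_\Sigma}(Q,P)$. (ii) If $\Gamma\subset\mathcal{M}_b(X)^2$ satisfies $S_\Sigma[\Gamma]\subset\Gamma$ (with $S_\Sigma$ applied componentwise) and the cost $c$ is $\Sigma$-invariant, i.e. $c(T_\sigma(x),T_\sigma(y))=c(x,y)$ for all $\sigma\in\Sigma$, $x,y\in X$, then $\mathcal{SD}^\Gamma_{c,\epsilon}(Q,P)=\mathcal{SD}^{\Gamma^{\mathrm{inv}}_\Sigma}_{c,\epsilon}(Q,P)$.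
   Context: $\mathcal{M}_b(X)$: bounded measurable functions; $\mathcal{P}(X)$: probability measures. $S_\Sigma[\gamma](x)=\int_\Sigma\gamma(T_{\sigma}(x))\mu_\Sigma(d\sigma)$. For $\Gamma$ a set of functions (or tuples of functions), $\Gamma^{\mathrm{inv}}_\Sigma=\{\gamma\in\Gamma:\gamma\circ T_\sigma=\gamma\ \forall\sigma\in\Sigma\}$ (componentwise for tuples). Let $f:[0,\infty)\to\mathbb{R}$ be convex, lower semicontinuous, $f(1)=0$, strictly convex at $1$, with Legendre transform $f^*(y)=\sup_x\{yx-f(x)\}$. The $(f,\Gamma)$-divergence is $D_f^\Gamma(Q\|P)=\sup_{\gamma\in\Gamma}\{E_Q[\gamma]-\Lambda_f^P[\gamma]\}$ with $\Lambda_f^P[\gamma]=\inf_{\nu\in\mathbb{R}}\{\nu+E_P[f^*(\gamma-\nu)]\}$. The $\Gamma$-IPM is $W^\Gamma(Q,P)=\sup_{\gamma\in\Gamma}\{E_Q[\gamma]-E_P[\gamma]\}$. For a measurable cost $c:X\times X\to[0,\infty)$, $\epsilon>0$ and $\Gamma$ a set of pairs $(\gamma_1,\gamma_2)$, $W^\Gamma_{c,\epsilon}(Q,P)=\sup_{(\gamma_1,\gamma_2)\in\Gamma}\{E_P[\gamma_1]+E_Q[\gamma_2]-\epsilon E_{P\times Q}[\exp((\gamma_1\oplus\gamma_2-c)/\epsilon)]+\epsilon\}$ where $\gamma_1\oplus\gamma_2(x,y)=\gamma_1(x)+\gamma_2(y)$, and the Sinkhorn divergence is $\mathcal{SD}^\Gamma_{c,\epsilon}(Q,P)=W^\Gamma_{c,\epsilon}(Q,P)-\tfrac12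 W^\Gamma_{c,\epsilon}(Q,Q)-\tfrac12 W^\Gamma_{c,\epsilon}(P,P)$. *)

From HB Require Import structures.
From mathcomp Require Import all_boot all_order all_algebra.
From mathcomp Require Import all_classical all_reals all_analysis.
Set Implicit Arguments. Unset Strict Implicit. Unset Printing Implicit Defensive.
Import Order.TTheory GRing.Theory Num.Theory.
Import numFieldNormedType.Exports.
Local Open Scope classical_set_scope.
Local Open Scope ring_scope.

Definition Borel (S : ptopologicalType) := g_sigma_algebraType (@open S).

Definition compact_hausdorff_group (S : ptopologicalType)
  (mul : S -> S -> S) (inv : S -> S) (e : S) : Prop :=
  [/\ (forall a b c, mul a (mul b c) = mul (mul a b) c),
      (forall a, mul e a = a /\ mul a e = a),
      (forall a, mul (inv a) a = e /\ mul a (inv a) = e) &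
      [/\ continuous (fun p : S * S => mul p.1 p.2),
      continuous inv,
      compact [set: S] & hausdorff_space S]].

Definition haar_probability (R : realType) (S : ptopologicalType)
  (mul : S -> S -> S) (mu : probability (Borel S) R) : Prop :=
  [/\ (forall (s : S) (A : set (Borel S)), measurable A ->
          mu [set mul s a | a in A] = mu A),
      (forall (s : S) (A : set (Borel S)), measurable A ->
          mu [set mul a s | a in A] = mu A),
      (forall A : set (Borel S), measurable A ->
          mu A = ereal_inf [set mu U | U in [set U : set (Borel S) | open (U : set S) /\ A `<=` U]]) &
      (forall U : set (Borel S), open (U : set S) ->
          mu U = ereal_sup [set mu K | K in [set K : set (Borel S) | compact (K : set S) /\ K `<=` U]])].

Definition measurable_action d (X : measurableType d) (S : ptopologicalType)
  (mul : S -> S -> S) (e : S) (T : S -> X -> X) : Prop :=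
  [/\ (forall x, T e x = x),
      (forall s t x, T (mul s t) x = T s (T t x)) &
      measurable_fun [set: (Borel S * X)%type] (fun p : Borel S * X => T p.1 p.2)].

Definition invariant_prob d (X : measurableType d) (R : realType) (S : Type)
  (T : S -> X -> X) (P : probability X R) : Prop :=
  forall s (A : set X), measurable A -> P (T s @^-1` A) = P A.

Definition Mb d (X : measurableType d) (R : realType) : set (X -> R) :=
  [set g : X -> R | measurable_fun [set: X] g /\ exists M : R, forall x, `|g x| <= M].

Definition symm d (X : measurableType d) (R : realType) (S : ptopologicalType)
  (mu : probability (Borel S) R) (T : S -> X -> X) (g : X -> R) : X -> R :=
  fun x => Rintegral mu [set: Borel S] (fun s : Borel S => g (T s x)).

Definition symm2 d (X : measurableType d) (R : realType) (S : ptopologicalType)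
  (mu : probability (Borel S) R) (T : S -> X -> X) (g : (X -> R) * (X -> R)) :=
  (symm mu T g.1, symm mu T g.2).

Definition inv_part (X S R : Type) (T : S -> X -> X) (G : set (X -> R)) :=
  [set g | G g /\ forall s, g \o T s = g].

Definition inv_part2 (X S R : Type) (T : S -> X -> X)
  (G : set ((X -> R) * (X -> R))) :=
  [set g | G g /\ forall s, g.1 \o T s = g.1 /\ g.2 \o T s = g.2].

(* conditions on f : [0,oo) -> R (only values on [0,oo) are relevant) *)
Definition admissible_f (R : realType) (f : R -> R) : Prop :=
  [/\ (forall x y t, 0 <= x -> 0 <= y -> 0 <= t <= 1 ->
         f (t * x + (1 - t) * y) <= t * f x + (1 - t) * f y),
      (forall x, 0 <= x -> forall eps, 0 < eps -> exists2 del, 0 < del &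
         forall y, 0 <= y -> `|y - x| < del -> f x - eps < f y),
      f 1 = 0 &
      (forall x y t, 0 <= x -> 0 <= y -> 0 < t < 1 -> x != y ->
         t * x + (1 - t) * y = 1 -> f 1 < t * f x + (1 - t) * f y)].

Local Open Scope ereal_scope.

Definition fstar (R : realType) (f : R -> R) (y : R) : \bar R :=
  ereal_sup [set ((y * x - f x)%R)%:E | x in [set x : R | (0 <= x)%R]].

Definition Ex d (X : measurableType d) (R : realType) (P : probability X R)
  (g : X -> R) : \bar R := \int[P]_x (g x)%:E.

Definition Lambda d (X : measurableType d) (R : realType) (f : R -> R)
  (P : probability X R) (g : X -> R) : \bar R :=
  ereal_inf [set nu%:E + \int[P]_x fstar f (g x - nu)%R | nu in [set: R]].

Definition Dfg d (X : measurableType d) (R : realType) (f : R -> R)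
  (G : set (X -> R)) (Q P : probability X R) : \bar R :=
  ereal_sup [set Ex Q g - Lambda f P g | g in G].

Definition IPM d (X : measurableType d) (R : realType)
  (G : set (X -> R)) (Q P : probability X R) : \bar R :=
  ereal_sup [set Ex Q g - Ex P g | g in G].

Definition Wce d (X : measurableType d) (R : realType) (c : X -> X -> R)
  (eps : R) (G : set ((X -> R) * (X -> R))) (Q P : probability X R) : \bar R :=
  ereal_sup [set Ex P g.1 + Ex Q g.2
     - eps%:E * \int[P \x Q]_z (expR ((g.1 z.1 + g.2 z.2 - c z.1 z.2) / eps))%:E
     + eps%:E | g in G].

Definition SD d (X : measurableType d) (R : realType) (c : X -> X -> R)
  (eps : R) (G : set ((X -> R) * (X -> R))) (Q P : probability X R) : \bar R :=
  Wce c eps G Q P - (2^-1)%:E * Wce c eps G Q Q - (2^-1)%:E * Wce c eps G P P.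

From mathcomp Require Import all_boot all_order all_algebra.
From mathcomp Require Import all_classical all_reals all_analysis measurable_realfun.
From mathcomp Require Import ring.
Import Order.TTheory GRing.Theory Num.Theory.
Import numFieldNormedType.Exports.
Local Open Scope classical_set_scope.
Local Open Scope ring_scope.

(* The symmetrization S[g](x) = ∫ g(T_σ x) dμ(σ) is Σ-invariant: since
   T_σ (T_τ x) = T_(στ) x, right invariance of the Haar measure absorbs the
   extra translation.  For invariant P and Q, Fubini and invariance give
   E_Q[S g] = E_Q[g], while Jensen's inequality for the convex functions f^*
   and exp, followed by Tonelli and invariance (of P, and of P × Q under the
   diagonal action when c is invariant), give Λ_f^P[S g] ≤ Λ_f^P[g] and
   E_(P×Q)[exp((S g₁ ⊕ S g₂ − c)/ε)] ≤ E_(P×Q)[exp((g₁ ⊕ g₂ − c)/ε)].  Hence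
   each objective is at least as large at S g as at g; as S maps Γ into
   Γ^inv ⊆ Γ, the suprema over Γ and over Γ^inv coincide, and the Sinkhorn
   divergence is a combination of three such suprema. *)

Definition measure_preserving {d} {Y : measurableType d} {R : realType}
    (m : set Y -> \bar R) (phi : Y -> Y) :=
  forall A, measurable A -> m (phi @^-1` A) = m A.

Section measure_integral.
Local Open Scope ereal_scope.
Context {R : realType} {dY : measure_display} {Y : measurableType dY}.
Variable m : {measure set Y -> \bar R}.

Lemma le_measurable_integral (u v : Y -> \bar R) :
  measurable_fun setT u -> measurable_fun setT v -> (forall y, u y <= v y) ->
  \int[m]_y u y <= \int[m]_y v y.
Proof.
move=> mu mv uv; rewrite integralE [leRHS]integralE.
apply: leeB; apply: ge0_le_integral => //.
- exact: measurable_funepos.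
- exact: measurable_funepos.
- by move=> y _; apply: (@funepos_le _ _ setT) => //; rewrite inE.
- exact: measurable_funeneg.
- exact: measurable_funeneg.
- by move=> y _; apply: (@funeneg_le _ _ setT) => //; rewrite inE.
Qed.

Lemma integral_measure_preserving (phi : Y -> Y) (h : Y -> \bar R) :
  measurable_fun setT phi -> measure_preserving m phi -> measurable_fun setT h ->
  \int[m]_y h (phi y) = \int[m]_y h y.
Proof.
move=> mphi mpres mh.
have ge0_preserved (k : Y -> \bar R) : measurable_fun setT k -> (forall y, 0 <= k y) ->
    \int[m]_y k (phi y) = \int[m]_y k y.
  move=> mk k0.
  have := ge0_integral_pushforward mphi m measurableT mk (fun y _ => k0 y).
  rewrite preimage_setT => <-.
  by apply: eq_measure_integral => A mA _; exact: mpres.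
rewrite integralE [RHS]integralE; congr (_ - _).
- rewrite -(ge0_preserved h^\+) ?funepos_ge0 //; last exact: measurable_funepos.
  by apply: eq_integral => y _; rewrite !funeposE.
- rewrite -(ge0_preserved h^\-) ?funeneg_ge0 //; last exact: measurable_funeneg.
  by apply: eq_integral => y _; rewrite !funenegE.
Qed.

End measure_integral.

Section probability_integral.
Local Open Scope ereal_scope.
Context {R : realType} {dY : measure_display} {Y : measurableType dY}.
Variable m : probability Y R.

Lemma integral_cst_probability (r : \bar R) : \int[m]_y (cst r) y = r.
Proof.
by rewrite integral_cst // -[RHS]mule1; congr (_ * _); exact: probability_setT.
Qed.

Lemma Rintegral_cst_probability (r : R) : Rintegral m setT (cst r) = r.
Proof. by rewrite /Rintegral (integral_cst_probability r%:E). Qed.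

Lemma Mb_integrable (u : Y -> R) : Mb u -> m.-integrable setT (EFin \o u).
Proof.
move=> [mu [M uM]]; apply: measurable_bounded_integrable => //.
  by rewrite ltey_eq fin_num_measure.
exists M; split; first exact: num_real.
by move=> N MN y _; exact: le_trans (uM y) (ltW MN).
Qed.

Lemma integralD_cst (u : Y -> \bar R) (c : R) :
  (0 <= c)%R -> measurable_fun setT u -> (forall y, (- c)%:E <= u y) ->
  \int[m]_y (u y + c%:E) = \int[m]_y u y + c%:E.
Proof.
move=> c0 mu uc.
have neg_le_c y : u^\- y <= c%:E.
  by rewrite funenegE ge_max lee_fin c0 leeNl -EFinN uc.
have neg_int : m.-integrable setT u^\-.
  apply: (le_integrable measurableT (measurable_funeneg mu) _
    (finite_measure_integrable_cst m c measurableT)) => y _.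
  by rewrite /= gee0_abs ?funeneg_ge0 // ger0_norm.
have -> : \int[m]_y (u y + c%:E) = \int[m]_y u^\+ y + \int[m]_y (c%:E - u^\- y).
  rewrite -ge0_integralD //.
  - apply: eq_integral => y _.
    by rewrite addeCA addeC [in LHS](funeposneg u).
  - exact: measurable_funepos.
  - by move=> y _; rewrite subre_ge0.
  - by apply: emeasurable_funB => //; exact: measurable_funeneg.
rewrite (integralB measurableT (finite_measure_integrable_cst m c measurableT) neg_int).
rewrite (integral_cst_probability c%:E) [in RHS]integralE.
by rewrite addeCA addeC.
Qed.

Lemma le_integral_affine_minorant (k : Y -> R) (F : Y -> \bar R) (a b : R) :
  m.-integrable setT (EFin \o k) -> measurable_fun setT F ->
  (forall y, (a * k y + b)%:E <= F y) ->
  (a * Rintegral m setT k + b)%:E <= \int[m]_y F y.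
Proof.
move=> ik mF kF.
have iak : m.-integrable setT (EFin \o (fun y => a * k y)%R).
  exact: (integrableZl measurableT a ik).
have ib := finite_measure_integrable_cst m b measurableT.
have iakb : m.-integrable setT (EFin \o (fun y => a * k y + b)%R).
  exact: (integrableD measurableT iak ib).
rewrite -RintegralZl // -[b in (_ + b)%R](Rintegral_cst_probability b) -RintegralD //.
rewrite /Rintegral fineK; last exact: (integrable_fin_num measurableT iakb).
apply: le_measurable_integral => //.
by case/integrableP: iakb.
Qed.

Lemma expR_Rintegral_le (k : Y -> R) :
  m.-integrable setT (EFin \o k) ->
  (expR (Rintegral m setT k))%:E <= \int[m]_y (expR (k y))%:E.
Proof.
move=> ik; set a := Rintegral m setT k.
(* Tangent line of [expR] at the mean [a]. *)
have -> : expR a = (expR a * a + expR a * (1 - a))%R by ring.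
apply: le_integral_affine_minorant => //.
  apply/measurable_EFinP; apply: measurableT_comp => //.
  by case/integrableP: ik => /measurable_EFinP.
move=> y; rewrite lee_fin -mulrDr.
have -> : expR (k y) = (expR a * expR (k y - a))%R.
  by rewrite -expRD addrCA subrr addr0.
by rewrite ler_wpM2l ?expR_ge0 // addrCA expR_ge1Dx.
Qed.

End probability_integral.

Section invariant_average.
Local Open Scope ereal_scope.
Context {R : realType} {dY dZ : measure_display}.
Context {Y : measurableType dY} {Z : measurableType dZ}.

Lemma integral_invariant_average (m : {measure set Y -> \bar R})
    (nu : probability Z R) (A : Z -> Y -> Y) (Phi : Y -> \bar R) :
  (forall s, measurable_fun setT (A s)) -> (forall s, measure_preserving m (A s)) ->
  measurable_fun setT Phi ->
  \int[nu]_s \int[m]_y Phi (A s y) = \int[m]_y Phi y.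
Proof.
move=> mA pA mPhi; rewrite -[RHS](integral_cst_probability nu).
by apply: eq_integral => s _; exact: integral_measure_preserving.
Qed.

Lemma product_measure_preserving (m1 : {measure set Y -> \bar R})
    (m2 : {sigma_finite_measure set Z -> \bar R}) (phi1 : Y -> Y) (phi2 : Z -> Z) :
  measurable_fun setT phi1 -> measurable_fun setT phi2 ->
  measure_preserving m1 phi1 -> measure_preserving m2 phi2 ->
  measure_preserving (m1 \x m2) (fun z => (phi1 z.1, phi2 z.2)).
Proof.
move=> mphi1 mphi2 pphi1 pphi2 B mB; rewrite /product_measure1 /=.
transitivity (\int[m1]_x (m2 \o xsection B) (phi1 x)).
  apply: eq_integral => x _ /=.
  have -> : xsection ((fun z => (phi1 z.1, phi2 z.2)) @^-1` B) x =
      phi2 @^-1` xsection B (phi1 x).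
    by apply/seteqP; split => y; rewrite /xsection /= !inE.
  by rewrite pphi2 //; exact: measurable_xsection.
apply: (integral_measure_preserving m1 phi1 (m2 \o xsection B)) => //.
exact: measurable_fun_xsection.
Qed.

End invariant_average.

Section legendre_transform.
Local Open Scope ereal_scope.
Context {R : realType}.
Implicit Types (f : R -> R) (y : R).

Lemma fstar_ge f y t : (0 <= t)%R -> ((y * t - f t)%R)%:E <= fstar f y.
Proof. by move=> t0; apply: ereal_sup_ubound; exists t. Qed.

Lemma fstar_ge_norm0 f y : (- `|f 0|)%R%:E <= fstar f y.
Proof.
apply: le_trans (fstar_ge f y 0%R (lexx _)); rewrite lee_fin mulr0 sub0r lerN2.
exact: ler_norm.
Qed.

Lemma measurable_fstar f : measurable_fun setT (fstar f).
Proof.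
apply: lower_semicontinuous_measurable; apply/lower_semicontinuousP => a.
have -> : [set y | a%:E < fstar f y] =
    \bigcup_(t in [set t : R | (0 <= t)%R]) [set y | (a < y * t - f t)%R].
  apply/seteqP; split => y /=.
    by move=> /ereal_sup_gt[_ [t t0 <-]]; rewrite lte_fin => ht; exists t.
  by move=> [t t0 ht]; apply: lt_le_trans (fstar_ge f y t t0); rewrite lte_fin.
apply: bigcup_open => t _.
have affine_cont : continuous (fun y : R => (y * t - f t)%R).
  by move=> y; apply: cvgB; [apply: cvgMl; exact: cvg_id | exact: cvg_cst].
apply: (open_comp (D := [set z | a < z]%R)) => [z _|]; first exact: affine_cont.
exact: open_gt.
Qed.

Context {dY : measure_display} {Y : measurableType dY}.

Lemma measurable_fstarB f (u : Y -> R) (nu : R) : measurable_fun setT u ->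
  measurable_fun setT (fun z => fstar f (u z - nu)).
Proof.
by move=> mu; apply: measurableT_comp (measurable_fstar f) _; exact: measurable_funB.
Qed.

Variable m : probability Y R.

Lemma fstar_Rintegral_le f (k : Y -> R) : m.-integrable setT (EFin \o k) ->
  fstar f (Rintegral m setT k) <= \int[m]_y fstar f (k y).
Proof.
move=> ik; apply: ge_ereal_sup => _ [t t0 <-].
rewrite mulrC; apply: le_integral_affine_minorant => //.
  apply: measurableT_comp; first exact: measurable_fstar.
  by case/integrableP: ik => /measurable_EFinP.
by move=> y; rewrite mulrC fstar_ge.
Qed.

End legendre_transform.

Lemma measurable_expR_cost {R : realType} {d : measure_display} {X : measurableType d}
    (c : X -> X -> R) (eps : R) (u1 u2 : X -> R) :
  measurable_fun [set: (X * X)%type] (fun z : X * X => c z.1 z.2) ->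
  measurable_fun setT u1 -> measurable_fun setT u2 ->
  measurable_fun [set: (X * X)%type]
    (fun z : X * X => (expR ((u1 z.1 + u2 z.2 - c z.1 z.2) / eps))%:E).
Proof.
move=> mc mu1 mu2; apply/measurable_EFinP; apply: measurableT_comp (@measurable_expR R) _.
apply: measurable_funM => //; apply: measurable_funB => //.
apply: measurable_funD; first exact: measurableT_comp mu1 measurable_fst.
exact: measurableT_comp mu2 measurable_snd.
Qed.

Lemma measurable_continuous_Borel (S1 S2 : ptopologicalType) (h : S1 -> S2) :
  continuous h -> measurable_fun [set: Borel S1] (h : Borel S1 -> Borel S2).
Proof.
move=> ch; apply: (@measurability _ _ (Borel S1) (Borel S2) setT _ (@open S2)) => //.
move=> _ [U oU <-]; apply: sub_sigma_algebra; rewrite setTI.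
by move/continuousP : ch; apply.
Qed.

Section compact_group_action.
Context {R : realType} {S : ptopologicalType} {mul : S -> S -> S} {inv : S -> S} {e : S}.
Context {mu : probability (Borel S) R}.
Hypotheses (HG : compact_hausdorff_group mul inv e) (HH : haar_probability mul mu).

Lemma measurable_mulr s :
  measurable_fun [set: Borel S] (fun a : Borel S => (mul a s : Borel S)).
Proof.
apply: measurable_continuous_Borel => a.
case: HG => _ _ _ [cmul _ _ _].
apply: (@continuous_comp _ _ _ (fun a : S => (a, s)) (fun p : S * S => mul p.1 p.2)).
  by apply: cvg_pair; [exact: cvg_id | exact: cvg_cst].
exact: cmul.
Qed.

Lemma haar_mulr_preserving s :
  measure_preserving mu (fun a : Borel S => (mul a s : Borel S)).
Proof.
move=> A mA; case: HG => assoc unit inverse _.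
have -> : (fun a : Borel S => (mul a s : Borel S)) @^-1` A = [set mul a (inv s) | a in A].
  apply/seteqP; split => a /=.
    move=> Aas; exists (mul a s) => //.
    by rewrite -assoc (proj2 (inverse s)) (proj2 (unit a)).
  by move=> [b Ab <-]; rewrite -assoc (proj1 (inverse s)) (proj2 (unit b)).
by case: HH => _ right_invariant _ _; rewrite right_invariant.
Qed.

Context {d : measure_display} {X : measurableType d} {T : S -> X -> X}.
Hypothesis HA : measurable_action mul e T.

Lemma measurable_action_uncurry :
  measurable_fun [set: (Borel S * X)%type] (fun p : Borel S * X => T p.1 p.2).
Proof. by case: HA. Qed.

Lemma measurable_action_uncurry_swap :
  measurable_fun [set: (X * Borel S)%type] (fun z : X * Borel S => T z.2 z.1).
Proof.
have mswap : measurable_fun [set: (X * Borel S)%type] (fun z : X * Borel S => (z.2, z.1)).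
  exact: measurable_fun_pair.
exact: measurableT_comp measurable_action_uncurry mswap.
Qed.

Lemma measurable_act s : measurable_fun [set: X] (T s).
Proof.
exact: measurableT_comp measurable_action_uncurry (pair1_measurable (s : Borel S)).
Qed.

Lemma measurable_diag_act s :
  measurable_fun [set: (X * X)%type] (fun z : X * X => (T s z.1, T s z.2)).
Proof.
apply: measurable_fun_pair.
- exact: measurableT_comp (measurable_act s) measurable_fst.
- exact: measurableT_comp (measurable_act s) measurable_snd.
Qed.

Lemma measurable_diag_action_uncurry :
  measurable_fun [set: ((X * X) * Borel S)%type]
    (fun p : (X * X) * Borel S => (T p.2 p.1.1, T p.2 p.1.2)).
Proof.
have m1 : measurable_fun setT (fun p : (X * X) * Borel S => (p.2, p.1.1)).
  apply: measurable_fun_pair measurable_snd _.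
  exact: measurableT_comp measurable_fst measurable_fst.
have m2 : measurable_fun setT (fun p : (X * X) * Borel S => (p.2, p.1.2)).
  apply: measurable_fun_pair measurable_snd _.
  exact: measurableT_comp measurable_snd measurable_fst.
apply: measurable_fun_pair.
- exact: measurableT_comp measurable_action_uncurry m1.
- exact: measurableT_comp measurable_action_uncurry m2.
Qed.

Lemma measurable_orbit_map (g : X -> R) x : measurable_fun setT g ->
  measurable_fun [set: Borel S] (fun s : Borel S => g (T s x)).
Proof.
move=> mg; apply: measurableT_comp mg _.
exact: measurableT_comp measurable_action_uncurry (measurable_pair2 x).
Qed.

Lemma Mb_orbit_map (g : X -> R) x : Mb g -> Mb (fun s : Borel S => g (T s x)).
Proof. by move=> [mg [M gM]]; split; [exact: measurable_orbit_map | exists M]. Qed.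

Lemma symm_invariant (g : X -> R) s : measurable_fun setT g ->
  symm mu T g \o T s = symm mu T g.
Proof.
move=> mg; apply/funext => x /=; rewrite /symm /Rintegral; congr fine.
have [_ act_mul _] := HA.
under eq_integral do rewrite -act_mul.
apply: (integral_measure_preserving mu _ (fun a => (g (T a x))%:E)).
- exact: measurable_mulr.
- exact: haar_mulr_preserving.
- by apply/measurable_EFinP; exact: measurable_orbit_map.
Qed.

End compact_group_action.

Section symmetrization.
Local Open Scope ereal_scope.
Context {R : realType} {S : ptopologicalType} {mul : S -> S -> S} {e : S}.
Context {mu : probability (Borel S) R}.
Context {d : measure_display} {X : measurableType d} {T : S -> X -> X}.
Hypothesis HA : measurable_action mul e T.

Lemma symmE (g : X -> R) x : Mb g -> (symm mu T g x)%:E = \int[mu]_s (g (T s x))%:E.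
Proof.
move=> hg; rewrite /symm /Rintegral fineK //; apply: integrable_fin_num => //.
exact: Mb_integrable mu _ (Mb_orbit_map HA _ x hg).
Qed.

Lemma Ex_symm (P : probability X R) (g : X -> R) :
  invariant_prob T P -> Mb g -> Ex P (symm mu T g) = Ex P g.
Proof.
move=> iP hg; rewrite /Ex.
under eq_integral do rewrite symmE //.
have [mg [M gM]] := hg.
have mgT : measurable_fun setT (fun z : X * Borel S => g (T z.2 z.1)).
  exact: measurableT_comp mg (measurable_action_uncurry_swap HA).
rewrite (Fubini (f := fun z : X * Borel S => (g (T z.2 z.1))%:E)); last first.
  by apply: (Mb_integrable (P \x mu)%E); split => //; exists M.
apply: (integral_invariant_average P mu T (fun x => (g x)%:E)) => //.
- exact: measurable_act HA.
- exact/measurable_EFinP.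
Qed.

Lemma fstar_symm_le (f : R -> R) (g : X -> R) x (nu : R) : Mb g ->
  fstar f (symm mu T g x - nu) <= \int[mu]_s fstar f (g (T s x) - nu).
Proof.
move=> hg; have ig := Mb_integrable mu _ (Mb_orbit_map HA _ x hg).
have inu := finite_measure_integrable_cst mu nu measurableT.
have -> : (symm mu T g x - nu)%R = Rintegral mu setT (fun s => g (T s x) - nu)%R.
  by rewrite RintegralB // Rintegral_cst_probability.
exact/fstar_Rintegral_le/(integrableB measurableT ig inu).
Qed.

Lemma expR_symm_le (g1 g2 : X -> R) x y (C eps : R) : Mb g1 -> Mb g2 ->
  (expR ((symm mu T g1 x + symm mu T g2 y - C) / eps))%:E <=
  \int[mu]_s (expR ((g1 (T s x) + g2 (T s y) - C) / eps))%:E.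
Proof.
move=> hg1 hg2; have i1 := Mb_integrable mu _ (Mb_orbit_map HA _ x hg1).
have i2 := Mb_integrable mu _ (Mb_orbit_map HA _ y hg2).
have iC := finite_measure_integrable_cst mu C measurableT.
have i12 := integrableD measurableT i1 i2.
have i12C := integrableB measurableT i12 iC.
have -> : ((symm mu T g1 x + symm mu T g2 y - C) / eps)%R =
    Rintegral mu setT (fun s => (g1 (T s x) + g2 (T s y) - C) / eps)%R.
  by rewrite RintegralZr // RintegralB // RintegralD // Rintegral_cst_probability.
exact/expR_Rintegral_le/(integrableZr measurableT eps^-1 i12C).
Qed.

Lemma integral_fstar_symm_le (f : R -> R) (P : probability X R) (g : X -> R) (nu : R) :
  invariant_prob T P -> Mb g -> measurable_fun setT (symm mu T g) ->
  \int[P]_x fstar f (symm mu T g x - nu) <= \int[P]_x fstar f (g x - nu).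
Proof.
move=> iP hg msg; have [mg _] := hg.
pose c0 := `|f 0|%R; have c00 : (0 <= c0)%R by exact: normr_ge0.
have F_ge (y : R) : (- c0)%:E <= fstar f y by exact: fstar_ge_norm0.
have F_shift_ge0 (y : R) : 0 <= fstar f y + c0%:E.
  by rewrite -leeBlDr // sub0e -EFinN.
have mFs := measurable_fstarB f _ nu msg; have mFg := measurable_fstarB f _ nu mg.
(* Shifting by [|f 0|] makes the integrands nonnegative, as Tonelli requires. *)
rewrite -(@leeD2rE _ c0%:E) // -!integralD_cst //.
pose H (z : X * Borel S) := fstar f (g (T z.2 z.1) - nu) + c0%:E.
have mH : measurable_fun setT H.
  apply: emeasurable_funD => //; apply: measurable_fstarB.
  exact: measurableT_comp mg (measurable_action_uncurry_swap HA).
apply: (@le_trans _ _ (\int[P]_x \int[mu]_s H (x, s))).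
  apply: ge0_le_integral => //.
  - exact: emeasurable_funD.
  - exact: measurable_fun_fubini_tonelli_F H mH (fun z => F_shift_ge0 _).
  move=> x _; rewrite /H /= (integralD_cst mu) ?leeD2r ?fstar_symm_le //.
  exact: measurable_fstarB (measurable_orbit_map HA _ x mg).
rewrite (fubini_tonelli H mH (fun z => F_shift_ge0 _)).
rewrite (integral_invariant_average P mu T (fun x => fstar f (g x - nu) + c0%:E)) //.
- exact: measurable_act HA.
- exact: emeasurable_funD.
Qed.

Lemma Lambda_symm_le (f : R -> R) (P : probability X R) (g : X -> R) :
  invariant_prob T P -> Mb g -> measurable_fun setT (symm mu T g) ->
  Lambda f P (symm mu T g) <= Lambda f P g.
Proof.
move=> iP hg msg; apply: le_ereal_inf_tmp => _ [nu _ <-].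
apply: le_trans (ereal_inf_lbound _) _; first by exists nu.
by rewrite leeD2l // integral_fstar_symm_le.
Qed.

Lemma integral_exp_symm_le (P Q : probability X R) (g1 g2 : X -> R)
    (c : X -> X -> R) (eps : R) :
  invariant_prob T P -> invariant_prob T Q -> Mb g1 -> Mb g2 ->
  measurable_fun setT (symm mu T g1) -> measurable_fun setT (symm mu T g2) ->
  measurable_fun [set: (X * X)%type] (fun z : X * X => c z.1 z.2) ->
  (forall s x y, c (T s x) (T s y) = c x y) ->
  \int[P \x Q]_z (expR ((symm mu T g1 z.1 + symm mu T g2 z.2 - c z.1 z.2) / eps))%:E <=
  \int[P \x Q]_z (expR ((g1 z.1 + g2 z.2 - c z.1 z.2) / eps))%:E.
Proof.
move=> iP iQ hg1 hg2 ms1 ms2 mc c_inv; have [mg1 _] := hg1; have [mg2 _] := hg2.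
pose Phi (z : X * X) := (expR ((g1 z.1 + g2 z.2 - c z.1 z.2) / eps))%:E.
have mPhi : measurable_fun setT Phi by exact: measurable_expR_cost.
pose E (p : (X * X) * Borel S) := Phi (T p.2 p.1.1, T p.2 p.1.2).
have mE : measurable_fun setT E.
  exact: measurableT_comp mPhi (measurable_diag_action_uncurry HA).
have E0 p : 0 <= E p by rewrite lee_fin expR_ge0.
apply: (@le_trans _ _ (\int[P \x Q]_z \int[mu]_s E (z, s))).
  apply: ge0_le_integral => //.
  - exact: measurable_expR_cost.
  - exact: measurable_fun_fubini_tonelli_F E mE E0.
  move=> [x y] _; rewrite /E /Phi /=.
  under eq_integral do rewrite c_inv.
  exact: expR_symm_le.
rewrite (@fubini_tonelli _ _ _ _ _ ((P \x Q)%E : probability _ R) mu E mE E0).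
rewrite (integral_invariant_average (P \x Q) mu (fun s z => (T s z.1, T s z.2)) Phi) //.
- exact: measurable_diag_act HA.
- move=> s; apply: (product_measure_preserving P Q).
  + exact: (measurable_act HA s).
  + exact: (measurable_act HA s).
  + exact: iP.
  + exact: iQ.
Qed.

End symmetrization.

Lemma ereal_sup_image_retract {R : realType} {U : Type} (A B : set U)
    (F : U -> \bar R) (h : U -> U) :
  B `<=` A -> (forall a, A a -> B (h a) /\ (F a <= F (h a))%E) ->
  ereal_sup [set F a | a in A] = ereal_sup [set F b | b in B].
Proof.
move=> BA retract; apply/le_anti/andP; split.
  apply: ge_ereal_sup => _ [a Aa <-]; have [Bha Fle] := retract a Aa.
  by apply: le_trans Fle _; apply: ereal_sup_ubound; exists (h a).
by apply: ereal_sup_le => _ [b Bb <-]; exists b => //; exact: BA.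
Qed.

Section invariant_restriction.
Local Open Scope ereal_scope.
Context {R : realType} {S : ptopologicalType} {mul : S -> S -> S} {inv : S -> S} {e : S}.
Context {mu : probability (Borel S) R}.
Context {d : measure_display} {X : measurableType d} {T : S -> X -> X}.
Hypotheses (HG : compact_hausdorff_group mul inv e) (HH : haar_probability mul mu).
Hypothesis HA : measurable_action mul e T.

Section functions.
Variable G : set (X -> R).
Hypotheses (G_Mb : G `<=` @Mb _ X R) (G_symm : forall g, G g -> G (symm mu T g)).

Lemma symm_inv_part g : G g -> inv_part T G (symm mu T g).
Proof.
move=> Gg; split; first exact: G_symm.
by move=> s; apply: (symm_invariant HG HH HA); case: (G_Mb _ Gg).
Qed.

Lemma Dfg_inv_part (f : R -> R) (Q P : probability X R) :
  invariant_prob T Q -> invariant_prob T P ->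
  Dfg f G Q P = Dfg f (inv_part T G) Q P.
Proof.
move=> iQ iP; apply: (@ereal_sup_image_retract _ _ _ _ _ (symm mu T)) => [g []//|g Gg].
split; first exact: symm_inv_part.
rewrite (Ex_symm HA _ _ iQ (G_Mb _ Gg)); apply: leeB => //.
apply: (Lambda_symm_le HA) => //; first exact: G_Mb.
by case: (G_Mb _ (G_symm _ Gg)).
Qed.

Lemma IPM_inv_part (Q P : probability X R) :
  invariant_prob T Q -> invariant_prob T P ->
  IPM G Q P = IPM (inv_part T G) Q P.
Proof.
move=> iQ iP; apply: (@ereal_sup_image_retract _ _ _ _ _ (symm mu T)) => [g []//|g Gg].
split; first exact: symm_inv_part.
by rewrite (Ex_symm HA _ _ iQ (G_Mb _ Gg)) (Ex_symm HA _ _ iP (G_Mb _ Gg)).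
Qed.

End functions.

Section pairs.
Variable G : set ((X -> R) * (X -> R)).
Hypotheses (G_Mb : G `<=` [set g | Mb g.1 /\ Mb g.2])
  (G_symm : forall g, G g -> G (symm2 mu T g)).

Lemma symm2_inv_part2 g : G g -> inv_part2 T G (symm2 mu T g).
Proof.
move=> Gg; split; first exact: G_symm.
have [[mg1 _] [mg2 _]] := G_Mb _ Gg.
by move=> s; split; exact: (symm_invariant HG HH HA).
Qed.

Lemma Wce_inv_part2 (c : X -> X -> R) (eps : R) (Q P : probability X R) :
  invariant_prob T Q -> invariant_prob T P -> (0 < eps)%R ->
  measurable_fun [set: (X * X)%type] (fun z : X * X => c z.1 z.2) ->
  (forall s x y, c (T s x) (T s y) = c x y) ->
  Wce c eps G Q P = Wce c eps (inv_part2 T G) Q P.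
Proof.
move=> iQ iP eps0 mc c_inv.
apply: (@ereal_sup_image_retract _ _ _ _ _ (symm2 mu T)) => [g []//|[g1 g2] Gg].
split; first exact: symm2_inv_part2.
have [hg1 hg2] := G_Mb _ Gg; have [[ms1 _] [ms2 _]] := G_Mb _ (G_symm _ Gg).
rewrite /= (Ex_symm HA _ _ iP hg1) (Ex_symm HA _ _ iQ hg2).
apply: leeD => //; apply: leeB => //; apply: lee_wpmul2l; first by rewrite lee_fin ltW.
exact: (integral_exp_symm_le HA _ _ _ _ _ _ iP iQ hg1 hg2 ms1 ms2 mc c_inv).
Qed.

End pairs.

End invariant_restriction.

Theorem theorem1 (R : realType) (d : measure_display) (X : measurableType d)
  (S : ptopologicalType) (mul : S -> S -> S) (inv : S -> S) (e : S)
  (mu : probability (Borel S) R) (T : S -> X -> X) (P Q : probability X R) :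
  compact_hausdorff_group mul inv e ->
  haar_probability mul mu ->
  measurable_action mul e T ->
  invariant_prob T P -> invariant_prob T Q ->
  (forall (G : set (X -> R)) (f : R -> R),
     G `<=` @Mb _ X R ->
     (forall g, G g -> G (symm mu T g)) ->
     admissible_f f ->
     Dfg f G Q P = Dfg f (inv_part T G) Q P /\
     IPM G Q P = IPM (inv_part T G) Q P) /\
  (forall (G : set ((X -> R) * (X -> R))) (c : X -> X -> R) (eps : R),
     G `<=` [set g | @Mb _ X R g.1 /\ @Mb _ X R g.2] ->
     (forall g, G g -> G (symm2 mu T g)) ->
     measurable_fun [set: (X * X)%type] (fun z : X * X => c z.1 z.2) ->
     (forall x y, 0 <= c x y) ->
     0 < eps ->
     (forall s x y, c (T s x) (T s y) = c x y) ->
     SD c eps G Q P = SD c eps (inv_part2 T G) Q P).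
Proof.
move=> HG HH HA iP iQ; split.
  move=> G f G_Mb G_symm _; split.
  - exact: (Dfg_inv_part HG HH HA _ G_Mb G_symm f Q P iQ iP).
  - exact: (IPM_inv_part HG HH HA _ G_Mb G_symm Q P iQ iP).
move=> G c eps G_Mb G_symm mc _ eps0 c_inv.
have W_inv A B (iA : invariant_prob T A) (iB : invariant_prob T B) :=
  Wce_inv_part2 HG HH HA _ G_Mb G_symm c eps A B iA iB eps0 mc c_inv.
by rewrite /SD (W_inv _ _ iQ iP) (W_inv _ _ iQ iQ) (W_inv _ _ iP iP).
Qed.
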